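(* Let $w,\Delta w\in\mathbb{R}$ with $w+\Delta w\neq 0$, and let $x\in\mathbb{R}$ with fractional part $\operatorname{frac}(x)=x-\lfloor x\rfloor$. Define the element-wise error $\mathrm{error}^{EW}(\delta)=(w+\Delta w)\,\delta+\Delta w\, x$ for $\delta\in\mathbb{R}$, the rounding-down and rounding-up perturbations $\Delta x^{-}=-\operatorname{frac}(x)$ and $\Delta x^{+}=1-\operatorname{frac}(x)$, and the border $B^E(x)=\frac{\Delta w}{w+\Delta w}\,x+\frac{1}{2}$. Then: (i) if $\operatorname{frac}(x)<B^E(x)$, then $\mathrm{error}^{EW}(\Delta x^{-})^2<\mathrm{error}^{EW}(\Delta x^{+})^2$; (ii) if $\operatorname{frac}(x)>B^E(x)$, then $\mathrm{error}^{EW}(\Delta x^{-})^2>\mathrm{error}^{EW}(\Delta x^{+})^2$. That is, the border $B^E$ is valid: rounding $x$ down when its fractional part is below $B^E(x)$ and up when it is above gives the smaller squared element-wise error.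
   Context: All quantities are scaled by the quantization step size. $w$ is a weight value, $\Delta w$ its quantization error, $x$ an activation value; quantizing $x$ to an integer adds either $\Delta x^{-}$ (rounding down) or $\Delta x^{+}$ (rounding up). The element-wise error of the quantized product $(w+\Delta w)(x+\delta)$ relative to $wx$ is $(w+\Delta w)\delta+\Delta w x$. A border function $B$ is called valid if for every $x$ with $\operatorname{frac}(x)<B(x)$ rounding down gives strictly smaller squared element-wise error than rounding up, and vice versa. *)

From Stdlib Require Import Reals Lra.
Open Scope R_scope.

(* floor x: Stdlib's Int_part x = up x - 1 is the floor of x. *)
Definition frac (x : R) : R := x - IZR (Int_part x).

(* element-wise error of the quantized product, relative to w*x *)
Definition errorEW (w dw x delta : R) : R := (w + dw) * delta + dw * x.

Definition dx_minus (x : R) : R := - frac x.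
Definition dx_plus (x : R) : R := 1 - frac x.

Definition borderE (w dw x : R) : R := dw / (w + dw) * x + 1 / 2.

From Stdlib Require Import Reals Lra.
Open Scope R_scope.

(* Rounding up instead of down shifts the error by exactly [w + dw], so the
   difference of the squared errors is [(w + dw) ^ 2] times an affine function
   of [frac x], which vanishes precisely at the border [borderE w dw x]. *)

Lemma errorEW_dx_plus (w dw x : R) :
  errorEW w dw x (dx_plus x) = errorEW w dw x (dx_minus x) + (w + dw).
Proof. unfold errorEW, dx_plus, dx_minus; ring. Qed.

Lemma errorEW_sq_plus_sub_minus (w dw x : R) : w + dw <> 0 ->
  errorEW w dw x (dx_plus x) ^ 2 - errorEW w dw x (dx_minus x) ^ 2
  = 2 * (w + dw) ^ 2 * (borderE w dw x - frac x).
Proof.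
  intro hw; rewrite errorEW_dx_plus.
  unfold errorEW, dx_minus, borderE; field; exact hw.
Qed.

Theorem theorem1 (w dw x : R) (hw : w + dw <> 0) :
  (frac x < borderE w dw x ->
     (errorEW w dw x (dx_minus x)) ^ 2 < (errorEW w dw x (dx_plus x)) ^ 2) /\
  (frac x > borderE w dw x ->
     (errorEW w dw x (dx_minus x)) ^ 2 > (errorEW w dw x (dx_plus x)) ^ 2).
Proof.
  pose proof (errorEW_sq_plus_sub_minus w dw x hw) as Hdiff.
  assert (Hsq : 0 < 2 * (w + dw) ^ 2).
  { apply Rmult_lt_0_compat; [lra |].
    rewrite <- Rsqr_pow2; now apply Rsqr_pos_lt. }
  split; intro Hf.
  - assert (0 < 2 * (w + dw) ^ 2 * (borderE w dw x - frac x))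
      by (apply Rmult_lt_0_compat; lra).
    lra.
  - assert (0 < 2 * (w + dw) ^ 2 * (frac x - borderE w dw x))
      by (apply Rmult_lt_0_compat; lra).
    lra.
Qed.
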